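(* Let $P=\sum_Ia_Ix^I\in\mathbb{R}[x_1,\dots,x_k]$, where $I=(i_1,\dots,i_k)$ ranges over $(\mathbb{N}\cup\{0\})^k$ and $x^I=x_1^{i_1}\cdots x_k^{i_k}$. Suppose $P$ is positive dominant, i.e. $A_I:=\sum_{I'\le I}a_{I'}>0$ for every multi-index $I$, where $I'\le I$ means $i'_j\le i_j$ for all $j$. Then $P>0$ on $[0,1]^k$. *)

From mathcomp Require Import all_boot all_order all_algebra.
From mathcomp Require Import mpoly.
Set Implicit Arguments. Unset Strict Implicit. Unset Printing Implicit Defensive.
Import Order.TTheory GRing.Theory Num.Theory.
Local Open Scope ring_scope.

(* Coefficients outside the support msupp P are zero, so summing over the
   support gives exactly the (finite) sum over all I' <= I. *)
Definition cum_coef (R : nzRingType) (k : nat) (P : {mpoly R[k]}) (I : 'X_{1..k}) : R :=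
  \sum_(I' <- msupp P | lem I' I) P@_I'.

Definition positive_dominant (R : realDomainType) (k : nat) (P : {mpoly R[k]}) : Prop :=
  forall I : 'X_{1..k}, 0 < cum_coef P I.

From mathcomp Require Import all_boot all_order all_algebra.
From mathcomp Require Import mpoly.
Import Order.TTheory GRing.Theory Num.Theory.
Set Implicit Arguments. Unset Strict Implicit. Unset Printing Implicit Defensive.
Local Open Scope ring_scope.

(* Abel summation.  For 0 <= y <= 1 the numbers y^i (1 - y) (i < N) and y^N
   are nonnegative, sum to 1, and those with index >= t sum to y^t.  Taking
   products over the coordinates, each monomial x^m with exponents <= N is the
   total weight of the grid points f >= m of {0..N}^k, so P(x) = sum_f A_f w_f
   is a convex combination of the positive numbers A_f. *)

Section AbelWeights.
Variable R : comNzRingType.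

Definition abel_weight (y : R) (N : nat) (i : 'I_N.+1) : R :=
  if (i < N)%N then y ^+ i * (1 - y) else y ^+ N.

Lemma sum_abel_weight_ge (y : R) (N t : nat) : (t <= N)%N ->
  \sum_(i < N.+1 | (t <= i)%N) abel_weight y i = y ^+ t.
Proof.
move=> le_tN; rewrite big_mkcond big_ord_recr /= -big_mkcond.
rewrite {2}/abel_weight ltnn le_tN.
have -> : \sum_(i < N | (t <= i)%N) abel_weight y (widen_ord (leqnSn N) i)
        = \sum_(t <= i < N) (y ^+ i - y ^+ i.+1).
  rewrite big_geq_mkord; apply: eq_bigr => i _.
  by rewrite /abel_weight /= ltn_ord exprSr mulrBr mulr1.
rewrite (@telescope_sumr_eq _ t N (fun i => - y ^+ i)) //; last first.
  by move=> i _; rewrite opprK addrC.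
by rewrite opprK addrC addNKr.
Qed.

Definition box_weight (k N : nat) (x : 'I_k -> R) (f : {ffun 'I_k -> 'I_N.+1}) : R :=
  \prod_j abel_weight (x j) (f j).

Lemma sum_box_weight_ge (k N : nat) (x : 'I_k -> R) (t : 'I_k -> nat) :
  (forall j, t j <= N)%N ->
  \sum_(f : {ffun 'I_k -> 'I_N.+1} | [forall j, t j <= f j]%N) box_weight x f
  = \prod_j x j ^+ t j.
Proof.
move=> le_tN.
under [RHS]eq_bigr => j _ do rewrite -(sum_abel_weight_ge _ (le_tN j)).
rewrite bigA_distr_big_dep; apply: eq_bigl => f.
by apply/forallP/familyP.
Qed.

Lemma sum_box_weight (k N : nat) (x : 'I_k -> R) :
  \sum_(f : {ffun 'I_k -> 'I_N.+1}) box_weight x f = 1.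
Proof.
have := @sum_box_weight_ge k N x (fun=> 0%N) (fun=> leq0n N).
rewrite (eq_bigr (fun=> 1)) ?big1_eq // => <-.
by apply: eq_bigl => f; apply/esym/forallP.
Qed.

End AbelWeights.

Section Positivity.
Variable R : realDomainType.

Lemma abel_weight_ge0 (y : R) (N : nat) (i : 'I_N.+1) :
  0 <= y <= 1 -> 0 <= abel_weight y i.
Proof.
case/andP=> y_ge0 y_le1; rewrite /abel_weight; case: ifP => _.
  by rewrite mulr_ge0 ?exprn_ge0 ?subr_ge0.
exact: exprn_ge0.
Qed.

Lemma box_weight_ge0 (k N : nat) (x : 'I_k -> R) (f : {ffun 'I_k -> 'I_N.+1}) :
  (forall j, 0 <= x j <= 1) -> 0 <= box_weight x f.
Proof. by move=> x01; apply: prodr_ge0 => j _; apply: abel_weight_ge0. Qed.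

Lemma convex_comb_gt0 (I : finType) (a w : I -> R) :
  (forall i, 0 < a i) -> (forall i, 0 <= w i) -> \sum_i w i = 1 ->
  0 < \sum_i a i * w i.
Proof.
move=> a_gt0 w_ge0 sum_w1.
have [i /andP[_ wi_gt0]] : exists i, true && (0 < w i).
  apply: psumr_neq0P => [i _|]; first exact: w_ge0.
  by rewrite sum_w1; apply/eqP/oner_neq0.
rewrite (bigD1 i) //= ltr_wpDr ?mulr_gt0 //.
by apply: sumr_ge0 => j _; rewrite mulr_ge0 ?(ltW (a_gt0 j)).
Qed.

End Positivity.

Section AbelExpansion.
Variables (R : comNzRingType) (k : nat).

Definition box_mnm (N : nat) (f : {ffun 'I_k -> 'I_N.+1}) : 'X_{1..k} :=
  [multinom (f j : nat) | j < k].

Lemma mnm_le_msize (P : {mpoly R[k]}) (m : 'X_{1..k}) (j : 'I_k) :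
  m \in msupp P -> (m j <= msize P)%N.
Proof.
move=> /msize_mdeg_lt /ltnW; apply: leq_trans.
by rewrite mdegE (bigD1 j) //= leq_addr.
Qed.

Lemma meval_abel_expansion (P : {mpoly R[k]}) (x : 'I_k -> R) :
  P.@[x] = \sum_(f : {ffun 'I_k -> 'I_(msize P).+1})
             cum_coef P (box_mnm f) * box_weight x f.
Proof.
under [RHS]eq_bigr => f _ do rewrite /cum_coef mulr_suml big_mkcond /=.
rewrite mevalE exchange_big /=; apply: eq_big_seq => m suppm.
rewrite -(sum_box_weight_ge x (fun j => mnm_le_msize j suppm)).
rewrite mulr_sumr big_mkcond /=; apply: eq_bigr => f _.
have -> : lem m (box_mnm f) = [forall j, m j <= f j]%N.
  by apply: eq_forallb => j; rewrite mnmE.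
by case: ifP; rewrite ?mul0r ?mulr0.
Qed.

End AbelExpansion.

Theorem lemma7p2 (R : realFieldType) (k : nat) (P : {mpoly R[k]}) :
  positive_dominant P ->
  forall x : 'I_k -> R, (forall j : 'I_k, 0 <= x j <= 1) -> 0 < P.@[x].
Proof.
move=> posP x x01; rewrite meval_abel_expansion.
apply: convex_comb_gt0 => [f|f|].
- exact: posP.
- exact: box_weight_ge0.
- exact: sum_box_weight.
Qed.
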